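(* Let $f:\mathbb{R}^p\times\mathbb{R}^N\to\mathbb{R}$ be differentiable and suppose there is $M>0$ such that for all $x_1,x_2\in\mathbb{R}^p$, $z_1,z_2\in\mathbb{R}^N$, $$\left\|\begin{pmatrix}\nabla_xf(x_1,z_1)-\nabla_xf(x_2,z_2)\\ \nabla_zf(x_1,z_1)-\nabla_zf(x_2,z_2)\end{pmatrix}\right\|\le M\left\|\begin{pmatrix}x_1-x_2\\ z_1-z_2\end{pmatrix}\right\|.$$ Let $K,\kappa$ be integers and, for $\lambda_1,\lambda_2\ge0$, let $S(\lambda_1,\lambda_2)\subset\mathbb{R}^p\times\mathbb{R}^N$ be the set of optimal solutions of $$\min_{x,z}\ f(x,z)+\lambda_1T_K(x)+\lambda_2T_\kappa(z).$$ Suppose there exist $\underline\lambda_1,\underline\lambda_2\ge0$ such that $S(\underline\lambda_1,\underline\lambda_2)$ is bounded, and let $C_x,C_z$ be constants with $\|\underline x\|\le C_x$ and $\|\underline z\|\le C_z$ for all $(\underline x,\underline z)\in S(\underline\lambda_1,\underline\lambda_2)$. Then for $\lambda_1,\lambda_2$ satisfying $$\lambda_1>\max\Big\{\|\nabla_xf(0,0)\|+M\big(\tfrac32C_x+C_z\big),\underline\lambda_1\Big\},\qquad \lambda_2>\max\Big\{\|\nabla_zf(0,0)\|+M\big(C_x+\tfrac32C_z\big),\underline\lambda_2\Big\},$$ the problem of minimizing $f(x,z)$ subject to $\|x\|_0\le K$, $\|z\|_0\le\kappa$ and the unconstrained problem $\min_{x,z} f(x,z)+\lambda_1T_K(x)+\lambda_2T_\kappa(z)$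 are equivalent in the sense that any global optimal solution of the unconstrained problem is globally optimal for the constrained problem (and vice versa), provided $S(\lambda_1,\lambda_2)\subset S(\underline\lambda_1,\underline\lambda_2)$.
   Context: $\|\cdot\|$ is the Euclidean norm and $\|x\|_0$ is the number of nonzero components of $x$. For $x\in\mathbb{R}^n$, let $x_{(i)}$ denote the component of $x$ with the $i$-th largest absolute value, $|x_{(1)}|\ge|x_{(2)}|\ge\cdots\ge|x_{(n)}|$, and $T_K(x):=|x_{(K+1)}|+\cdots+|x_{(n)}|$ (the sum of the $n-K$ smallest absolute values), so that $T_K(x)=0$ iff $\|x\|_0\le K$.
   Formalization: The vice versa direction, that every global optimal solution of the constrained problem is globally optimal for the unconstrained problem, holds only when $S(\lambda_1,\lambda_2)$ is nonempty. The statement above fails without it. *)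

From HB Require Import structures.
From mathcomp Require Import all_boot all_order all_algebra.
From mathcomp Require Import all_classical all_reals all_analysis.
Set Implicit Arguments. Unset Strict Implicit. Unset Printing Implicit Defensive.
Import Order.TTheory GRing.Theory Num.Theory.
Import numFieldNormedType.Exports.
Local Open Scope ring_scope.

Section Defs.
Variable R : realType.

Definition enorm n (v : 'rV[R]_n) : R := Num.sqrt (\sum_(i < n) (v 0 i) ^+ 2).

Definition l0norm n (v : 'rV[R]_n) : nat := #|[set i | v 0 i != 0]|.

(* T_K(x): sum of the n-K smallest absolute values (absolute values sorted
   in nonincreasing order, the first K dropped) *)
Definition TK n (K : nat) (v : 'rV[R]_n) : R :=
  \sum_(a <- drop K (sort (fun a b : R => b <= a) [seq `|v 0 i| | i <- enum 'I_n])) a.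

Definition gradx p N (f : 'rV[R]_p -> 'rV[R]_N -> R) x z : 'rV[R]_p :=
  \row_(i < p) derive (fun x' => f x' z) x (delta_mx 0 i).
Definition gradz p N (f : 'rV[R]_p -> 'rV[R]_N -> R) x z : 'rV[R]_N :=
  \row_(i < N) derive (fun z' => f x z') z (delta_mx 0 i).

Definition fjoint p N (f : 'rV[R]_p -> 'rV[R]_N -> R) (w : 'rV[R]_(p + N)) : R :=
  f (lsubmx w) (rsubmx w).

Definition pen p N (f : 'rV[R]_p -> 'rV[R]_N -> R) (K kappa : nat) (l1 l2 : R) x z : R :=
  f x z + l1 * TK K x + l2 * TK kappa z.

Definition Sopt p N (f : 'rV[R]_p -> 'rV[R]_N -> R) (K kappa : nat) (l1 l2 : R)
  (x : 'rV[R]_p) (z : 'rV[R]_N) : Prop :=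
  forall x' z', pen f K kappa l1 l2 x z <= pen f K kappa l1 l2 x' z'.

Definition copt p N (f : 'rV[R]_p -> 'rV[R]_N -> R) (K kappa : nat)
  (x : 'rV[R]_p) (z : 'rV[R]_N) : Prop :=
  [/\ (l0norm x <= K)%N, (l0norm z <= kappa)%N &
      forall x' z', (l0norm x' <= K)%N -> (l0norm z' <= kappa)%N -> f x z <= f x' z'].

End Defs.

(* T_K(x) is the least l1 mass of x outside an index set of size at most K; it
   vanishes exactly on K-sparse vectors, and zeroing a nonzero entry x_i outside an
   optimal index set lowers it by |x_i|.  If a minimizer (x, z) of the penalized
   problem had more than K nonzero entries in x, zeroing such an x_i would change f
   by at most |x_i| |d_i f(x, z)| + M x_i^2 / 2 (descent lemma for the M-Lipschitz
   gradient), where |d_i f(x, z)| <= |grad_x f(0, 0)| + M (Cx + Cz) and |x_i| <= Cx,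
   while the penalty drops by lam1 |x_i|: the bound on lam1 makes this a strict
   decrease.  So penalized minimizers are feasible, the penalty vanishes on feasible
   points, and the two problems share their optimal solutions. *)

From mathcomp Require Import all_boot all_order all_algebra.
From mathcomp Require Import all_classical all_reals all_analysis.
From mathcomp Require Import ring lra.
Import Order.TTheory GRing.Theory Num.Theory.
Import numFieldNormedType.Exports.
Set Implicit Arguments. Unset Strict Implicit.
Local Open Scope ring_scope.

Section TopSums.
Variables (R : realType) (n : nat).
Implicit Types (F : 'I_n -> R) (A B S T : {set 'I_n}).

Lemma sum_setC F A : \sum_(i in ~: A) F i = \sum_i F i - \sum_(i in A) F i.
Proof.
rewrite (bigID (mem A) predT) /= addrAC subrr add0r.
by apply: eq_bigl => i; rewrite inE.
Qed.

Lemma sum_le_dominated F A B :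
  (forall b, b \in B -> 0 <= F b) -> (#|A| <= #|B|)%N ->
  (forall a b, a \in A -> b \in B -> F a <= F b) ->
  \sum_(a in A) F a <= \sum_(b in B) F b.
Proof.
move=> F0 cAB FAB; have [B0 | Bpos] := posnP #|B|.
  by move: cAB; rewrite B0 leqn0 => /eqP/cards0_eq ->; rewrite big_set0 sumr_ge0.
have double : (\sum_(a in A) F a) *+ #|B| <= (\sum_(b in B) F b) *+ #|A|.
  rewrite -!sumrMnl; under eq_bigr do rewrite -sumr_const.
  under [X in _ <= X]eq_bigr do rewrite -sumr_const.
  rewrite [X in _ <= X]exchange_big /=.
  by apply: ler_sum => a aA; apply: ler_sum => b bB; apply: FAB.
rewrite -(ler_pMn2r Bpos); apply: (le_trans double).
by apply: ler_wpMn2l; first exact: sumr_ge0.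
Qed.

Lemma sum_le_dominating_set F S T : (forall i, 0 <= F i) -> (#|S| <= #|T|)%N ->
  (forall i j, i \in T -> j \notin T -> F j <= F i) ->
  \sum_(i in S) F i <= \sum_(i in T) F i.
Proof.
move=> F0 cST dom.
rewrite (big_setID T) [X in _ <= X](big_setID S) /= finset.setIC lerD2l.
apply: sum_le_dominated => [b _ | | a b]; first exact: F0.
- by rewrite -(leq_add2l #|S :&: T|) cardsID finset.setIC cardsID.
- by rewrite !inE => /andP[aT _] /andP[_ bT]; apply: dom.
Qed.

End TopSums.

Section TopIndices.
Variables (R : realType) (n K : nat) (F : 'I_n -> R).

Let by_decreasing_F := sort (relpre F (fun a b : R => b <= a)) (enum 'I_n).

Definition top_indices : {set 'I_n} := [set i | i \in take K by_decreasing_F].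

Let uniq_sorted : uniq by_decreasing_F.
Proof. by rewrite sort_uniq enum_uniq. Qed.

Let mem_sorted i : i \in by_decreasing_F.
Proof. by rewrite mem_sort mem_enum. Qed.

Lemma card_top_indices : #|top_indices| = minn K n.
Proof.
rewrite cardsE (card_uniqP (take_uniq _ uniq_sorted)) size_take.
by rewrite size_sort size_enum_ord /minn; case: ltnP.
Qed.

Lemma top_indices_dominate i j :
  i \in top_indices -> j \notin top_indices -> F j <= F i.
Proof.
rewrite !inE => iT jT.
have : pairwise (relpre F (fun a b : R => b <= a))
         (take K by_decreasing_F ++ drop K by_decreasing_F).
  rewrite cat_take_drop -sorted_pairwise ?sort_sorted //.
    by move=> a b; apply: le_total.
  by move=> a b c /= ba cb; apply: le_trans cb ba.
rewrite pairwise_cat => /and3P[/allrelP dom _ _]; apply: dom => //.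
by have := mem_sorted j; rewrite -{1}(cat_take_drop K by_decreasing_F) mem_cat (negbTE jT).
Qed.

Lemma sum_drop_sorted :
  \sum_(a <- drop K (sort (fun a b : R => b <= a) [seq F i | i <- enum 'I_n])) a
  = \sum_(i in ~: top_indices) F i.
Proof.
rewrite sort_map -map_drop big_map.
rewrite big_uniq /=; last by rewrite drop_uniq.
apply: eq_bigl => i; rewrite !inE.
move: (uniq_sorted) (mem_sorted i).
rewrite -{1 2}(cat_take_drop K by_decreasing_F) cat_uniq mem_cat.
case/and3P=> _ /hasPn disj _; case/orP=> [iT | iD]; last by rewrite iD (negbTE (disj i iD)).
by rewrite iT; apply/negbTE/negP => /disj; rewrite iT.
Qed.

End TopIndices.

Section TopKPenalty.
Variables (R : realType) (n K : nat).
Implicit Types (x : 'rV[R]_n) (S : {set 'I_n}).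

Lemma TK_top_indices x :
  TK K x = \sum_(i in ~: top_indices K (fun i => `|x 0 i|)) `|x 0 i|.
Proof. exact: sum_drop_sorted. Qed.

Lemma TK_le_sum_setC x S : (#|S| <= K)%N -> TK K x <= \sum_(i in ~: S) `|x 0 i|.
Proof.
move=> cS; rewrite TK_top_indices !sum_setC lerD2l lerN2.
apply: sum_le_dominating_set => [i | | i j]; first exact: normr_ge0.
  by rewrite card_top_indices leq_min cS /= -[X in (_ <= X)%N]card_ord max_card.
exact: top_indices_dominate.
Qed.

Lemma TK_eq0 x : (l0norm x <= K)%N -> TK K x = 0.
Proof.
move=> sparse; apply/eqP; rewrite eq_le; apply/andP; split.
  apply: le_trans (TK_le_sum_setC x sparse) _.
  by rewrite big1 // => i; rewrite !inE negbK => /eqP ->; rewrite normr0.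
by rewrite TK_top_indices sumr_ge0.
Qed.

Lemma TK_zero_entry x : (K < l0norm x)%N ->
  exists2 i, x 0 i != 0 & TK K (x - x 0 i *: delta_mx 0 i) <= TK K x - `|x 0 i|.
Proof.
set T := top_indices K (fun i => `|x 0 i|) => dense.
have /subsetPn[i] : ~~ ([set i | x 0 i != 0] \subset T).
  apply: contraTN dense => /subset_leq_card supp_le; rewrite -leqNgt.
  by apply: leq_trans supp_le _; rewrite card_top_indices geq_minl.
rewrite inE => xi iT; exists i => //.
have cT : (#|T| <= K)%N by rewrite card_top_indices geq_minl.
apply: le_trans (TK_le_sum_setC _ cT) _.
have entry j : (x - x 0 i *: delta_mx 0 i) 0 j = if j == i then 0 else x 0 j.
  by rewrite !mxE eqxx /=; case: eqP => [->|_]; rewrite ?mulr1 ?subrr ?mulr0 ?subr0.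
have iCT : i \in ~: T by rewrite finset.in_setC.
rewrite TK_top_indices -/T (bigD1 i iCT) [X in _ <= X - _](bigD1 i iCT) /=.
rewrite entry eqxx normr0 add0r addrAC subrr add0r.
by under eq_bigr => j /andP[_ /negbTE ji] do rewrite entry ji.
Qed.

End TopKPenalty.

Section EuclideanNorm.
Variable R : realType.

Lemma enorm_ge0 n (v : 'rV[R]_n) : 0 <= enorm v.
Proof. exact: sqrtr_ge0. Qed.

Lemma entry_le_enorm n (v : 'rV[R]_n) i : `|v 0 i| <= enorm v.
Proof.
rewrite /enorm -sqrtr_sqr; apply: ler_wsqrtr.
by rewrite (bigD1 i) //= lerDl sumr_ge0 // => j _; apply: sqr_ge0.
Qed.

Lemma enorm_row_mx_le p N (u : 'rV[R]_p) (w : 'rV[R]_N) :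
  enorm (row_mx u w) <= enorm u + enorm w.
Proof.
have sum_sq_enorm m (v : 'rV[R]_m) : \sum_(i < m) v 0 i ^+ 2 = enorm v ^+ 2.
  by rewrite sqr_sqrtr // sumr_ge0 // => i _; apply: sqr_ge0.
rewrite -(ger0_norm (addr_ge0 (enorm_ge0 u) (enorm_ge0 w))) -sqrtr_sqr.
apply: ler_wsqrtr; rewrite big_split_ord /=.
under eq_bigr do rewrite row_mxEl; under [X in _ + X]eq_bigr do rewrite row_mxEr.
by rewrite !sum_sq_enorm sqrrD addrAC lerDl mulrn_wge0 // mulr_ge0 // enorm_ge0.
Qed.

Lemma enorm_scale_delta n (i : 'I_n) (c : R) : enorm (c *: delta_mx 0 i) = `|c|.
Proof.
rewrite /enorm (bigD1 i) //= big1 ?addr0 => [|j /negbTE ji].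
  by rewrite !mxE !eqxx mulr1 sqrtr_sqr.
by rewrite !mxE ji andbF mulr0 expr0n.
Qed.

End EuclideanNorm.

Section SparsePenalizedMinimizers.
Variables (R : realType) (n K : nat) (phi : 'rV[R]_n -> R) (g : 'rV[R]_n).
Variables (lam M B C : R) (u : 'rV[R]_n).
Hypothesis u_min : forall u', phi u + lam * TK K u <= phi u' + lam * TK K u'.
Hypothesis phi_step :
  forall i c, phi (u + c *: delta_mx 0 i) <= phi u + c * g 0 i + M * c ^+ 2 / 2.
Hypotheses (M_ge0 : 0 <= M) (g_le : forall i, `|g 0 i| <= B) (u_le : enorm u <= C).
Hypothesis lam_gt : B + M * C / 2 < lam.

Lemma penalized_min_sparse : (l0norm u <= K)%N.
Proof.
case: leqP => // /TK_zero_entry[i ui TK_drop]; exfalso.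
set a := u 0 i in ui TK_drop.
have a_pos : 0 < `|a| by rewrite normr_gt0.
have a_le : `|a| <= C := le_trans (entry_le_enorm u i) u_le.
have lin : - a * g 0 i <= `|a| * B.
  by apply: le_trans (ler_norm _) _; rewrite normrM normrN ler_wpM2l.
have quad : M * (- a) ^+ 2 <= M * (`|a| * C).
  by rewrite ler_wpM2l // sqrrN -real_normK ?num_real // expr2 ler_wpM2l.
have lam_ge0 : 0 <= lam.
  apply: le_trans (ltW lam_gt); rewrite addr_ge0 ?divr_ge0 ?mulr_ge0 //.
    exact: le_trans (normr_ge0 _) (g_le i).
  exact: le_trans (normr_ge0 _) a_le.
have pen_drop : lam * TK K (u - a *: delta_mx 0 i) <= lam * TK K u - lam * `|a|.
  by rewrite -mulrBr ler_wpM2l.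
have gain : 0 < `|a| * (lam - (B + M * C / 2)) by rewrite mulr_gt0 // subr_gt0.
have := u_min (u - a *: delta_mx 0 i); have := phi_step i (- a).
rewrite scaleNr; lra.
Qed.

End SparsePenalizedMinimizers.

Section DescentLemma.
Variable R : realType.

Lemma descent_unit_interval (phi dphi : R -> R) (L : R) :
  (forall t : R, is_derive t 1 phi (dphi t)) ->
  (forall s, 0 <= s <= 1 -> dphi s - dphi 0 <= L * s) ->
  phi 1 <= phi 0 + dphi 0 + L / 2.
Proof.
move=> dphiE dphi_lip.
(* MVT applied to phi minus its quadratic model q. *)
pose q : R -> R := (id : R -> R) * cst (dphi 0) + cst (L / 2) * ((id : R -> R) * id).
have dq (t : R) : is_derive t 1 q (dphi 0 + L * t).
  apply: is_derive_eq; rewrite !scaler0 addr0 add0r /=.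
  by change (dphi 0 * 1 + L / 2 * (t * 1 + t * 1) = dphi 0 + L * t); rewrite !mulr1; field.
have dgap (t : R) := is_deriveB (dphiE t) (dq t).
have [c] := MVT (@ltr01 R) (fun t _ => dgap t)
  (derivable_within_continuous (fun t _ => @ex_derive _ _ _ _ _ _ _ (dgap t))).
rewrite in_itv /= => /andP[c0 c1] mvt.
have : dphi c - dphi 0 <= L * c by apply: dphi_lip; rewrite !ltW.
move: mvt; rewrite /q !fctE /= !mul1r !mul0r mulr1 mulr0 addr0 subr0.
lra.
Qed.

Lemma is_derive_line n (G : 'rV[R]_n -> R) a v t :
  differentiable G (a + t *: v) ->
  is_derive t 1 (fun s => G (a + s *: v)) ('D_v G (a + t *: v)).
Proof.
move=> dG.
have quotE : (fun h : R => h^-1 *: (((fun s => G (a + s *: v)) \o shift t) (h *: 1)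
                                     - G (a + t *: v))) =
             (fun h : R => h^-1 *: ((G \o shift (a + t *: v)) (h *: v) - G (a + t *: v))).
  by apply: funext => h /=; rewrite -[h *: 1]/(h * 1) mulr1 scalerDl addrCA.
apply: DeriveDef; first by rewrite /derivable quotE; apply: diff_derivable.
by rewrite /derive quotE.
Qed.

Lemma descent_line n (G : 'rV[R]_n -> R) a v (L : R) :
  (forall w, differentiable G w) ->
  (forall s, 0 <= s <= 1 -> 'D_v G (a + s *: v) - 'D_v G a <= L * s) ->
  G (a + v) <= G a + 'D_v G a + L / 2.
Proof.
move=> dG lip.
have := @descent_unit_interval (fun s => G (a + s *: v)) (fun s => 'D_v G (a + s *: v)) L.
rewrite scale1r scale0r addr0; apply => [t | s /lip //]; exact: is_derive_line.
Qed.

End DescentLemma.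

Section CoordinateDescent.
Variable R : realType.

Definition grad n (G : 'rV[R]_n -> R) (w : 'rV[R]_n) : 'rV[R]_n :=
  \row_(i < n) 'D_(delta_mx 0 i) G w.

Lemma coord_descent n (G : 'rV[R]_n -> R) (M : R) w j c :
  (forall w, differentiable G w) ->
  (forall w1 w2, enorm (grad G w1 - grad G w2) <= M * enorm (w1 - w2)) ->
  G (w + c *: delta_mx 0 j) <= G w + c * grad G w 0 j + M * c ^+ 2 / 2.
Proof.
move=> dG lip.
have D_scaled u : 'D_(c *: delta_mx 0 j) G u = c * grad G u 0 j.
  by rewrite mxE !deriveE // linearZ.
apply: le_trans (descent_line (L := M * c ^+ 2) dG _) _ => [s /andP[s0 _]|].
  rewrite !D_scaled -mulrBr; apply: le_trans (ler_norm _) _.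
  have := entry_le_enorm (grad G (w + s *: (c *: delta_mx 0 j)) - grad G w) j.
  move=> /le_trans /(_ (lip _ _)); rewrite !mxE addrAC subrr add0r scalerA enorm_scale_delta.
  rewrite normrM normrM (ger0_norm s0) => grad_diff.
  apply: le_trans (ler_wpM2l (normr_ge0 c) grad_diff) _.
  by rewrite -real_normK ?num_real //; lra.
by rewrite D_scaled mulrA.
Qed.

Lemma grad_entry_le n (G : 'rV[R]_n -> R) (M : R) w j :
  (forall w1 w2, enorm (grad G w1 - grad G w2) <= M * enorm (w1 - w2)) ->
  `|grad G w 0 j| <= `|grad G 0 0 j| + M * enorm w.
Proof.
move=> lip; rewrite -[grad G w 0 j](subrK (grad G 0 0 j)) addrC.
apply: le_trans (ler_normD _ _) _; rewrite lerD2l.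
have := le_trans (entry_le_enorm (grad G w - grad G 0) j) (lip w 0).
by rewrite !mxE subr0.
Qed.

End CoordinateDescent.

Section SeparableCoordinates.
Variables (R : realType) (p N : nat) (f : 'rV[R]_p -> 'rV[R]_N -> R) (M : R).
Hypothesis f_diff : forall w : 'rV[R]_(p + N), differentiable (fjoint f) w.
Hypothesis f_lip : forall (x1 x2 : 'rV[R]_p) (z1 z2 : 'rV[R]_N),
  enorm (row_mx (gradx f x1 z1 - gradx f x2 z2) (gradz f x1 z1 - gradz f x2 z2))
    <= M * enorm (row_mx (x1 - x2) (z1 - z2)).

Lemma derive_fjoint_row_mxl x z u :
  'D_(row_mx u 0) (fjoint f) (row_mx x z) = 'D_u (fun x' => f x' z) x.
Proof.
rewrite /derive.
suff -> : (fun h : R => h^-1 *: ((fjoint f \o shift (row_mx x z)) (h *: row_mx u 0)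
                                 - fjoint f (row_mx x z)))
  = (fun h : R => h^-1 *: (((fun x' => f x' z) \o shift x) (h *: u) - f x z)) by [].
apply: funext => h /=.
by rewrite /fjoint scale_row_mx scaler0 add_row_mx add0r !row_mxKl !row_mxKr.
Qed.

Lemma derive_fjoint_row_mxr x z u :
  'D_(row_mx 0 u) (fjoint f) (row_mx x z) = 'D_u (f x) z.
Proof.
rewrite /derive.
suff -> : (fun h : R => h^-1 *: ((fjoint f \o shift (row_mx x z)) (h *: row_mx 0 u)
                                 - fjoint f (row_mx x z)))
  = (fun h : R => h^-1 *: ((f x \o shift z) (h *: u) - f x z)) by [].
apply: funext => h /=.
by rewrite /fjoint scale_row_mx scaler0 add_row_mx add0r !row_mxKl !row_mxKr.
Qed.

Lemma grad_fjoint x z : grad (fjoint f) (row_mx x z) = row_mx (gradx f x z) (gradz f x z).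
Proof.
rewrite -[LHS]hsubmxK; congr row_mx; apply/rowP => i; rewrite !mxE.
  by rewrite delta_mx_lshift derive_fjoint_row_mxl.
by rewrite delta_mx_rshift derive_fjoint_row_mxr.
Qed.

Lemma grad_fjoint_lip w1 w2 :
  enorm (grad (fjoint f) w1 - grad (fjoint f) w2) <= M * enorm (w1 - w2).
Proof.
rewrite -(hsubmxK w1) -(hsubmxK w2) !grad_fjoint.
by rewrite !opp_row_mx !add_row_mx f_lip.
Qed.

Lemma descent_x x z i c :
  f (x + c *: delta_mx 0 i) z <= f x z + c * gradx f x z 0 i + M * c ^+ 2 / 2.
Proof.
have := coord_descent (row_mx x z) (lshift N i) c f_diff grad_fjoint_lip.
rewrite delta_mx_lshift scale_row_mx scaler0 add_row_mx addr0 grad_fjoint row_mxEl.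
by rewrite /fjoint !row_mxKl !row_mxKr.
Qed.

Lemma descent_z x z i c :
  f x (z + c *: delta_mx 0 i) <= f x z + c * gradz f x z 0 i + M * c ^+ 2 / 2.
Proof.
have := coord_descent (row_mx x z) (rshift p i) c f_diff grad_fjoint_lip.
rewrite delta_mx_rshift scale_row_mx scaler0 add_row_mx addr0 grad_fjoint row_mxEr.
by rewrite /fjoint !row_mxKl !row_mxKr.
Qed.

Hypothesis M_ge0 : 0 <= M.

Lemma gradx_entry_le x z i :
  `|gradx f x z 0 i| <= enorm (gradx f 0 0) + M * (enorm x + enorm z).
Proof.
have := grad_entry_le (row_mx x z) (lshift N i) grad_fjoint_lip.
rewrite -row_mx0 !grad_fjoint !row_mxEl => /le_trans; apply.
by rewrite lerD ?entry_le_enorm ?ler_wpM2l ?enorm_row_mx_le.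
Qed.

Lemma gradz_entry_le x z i :
  `|gradz f x z 0 i| <= enorm (gradz f 0 0) + M * (enorm x + enorm z).
Proof.
have := grad_entry_le (row_mx x z) (rshift p i) grad_fjoint_lip.
rewrite -row_mx0 !grad_fjoint !row_mxEr => /le_trans; apply.
by rewrite lerD ?entry_le_enorm ?ler_wpM2l ?enorm_row_mx_le.
Qed.

Variables (K kappa : nat) (lam1 lam2 Cx Cz : R) (x : 'rV[R]_p) (z : 'rV[R]_N).
Hypothesis xz_opt : Sopt f K kappa lam1 lam2 x z.
Hypotheses (x_le : enorm x <= Cx) (z_le : enorm z <= Cz).

Lemma Sopt_sparse_x :
  enorm (gradx f 0 0) + M * (3 / 2 * Cx + Cz) < lam1 -> (l0norm x <= K)%N.
Proof.
move=> lam1_gt.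
apply: (@penalized_min_sparse _ _ _ (fun x' => f x' z + lam2 * TK kappa z)
          (gradx f x z) lam1 M (enorm (gradx f 0 0) + M * (Cx + Cz)) Cx) => //=.
- by move=> x'; have := xz_opt x' z; rewrite /pen addrAC [X in _ <= X]addrAC.
- move=> i c; rewrite -2![X in _ <= X]addrA [lam2 * _ + _]addrC !addrA lerD2r.
  exact: descent_x.
- move=> i; apply: le_trans (gradx_entry_le x z i) _.
  by rewrite lerD2l ler_wpM2l // lerD.
- apply: le_lt_trans lam1_gt; rewrite -addrA lerD2l.
  by rewrite [leLHS](_ : _ = M * (3 / 2 * Cx + Cz)) //; field.
Qed.

Lemma Sopt_sparse_z :
  enorm (gradz f 0 0) + M * (Cx + 3 / 2 * Cz) < lam2 -> (l0norm z <= kappa)%N.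
Proof.
move=> lam2_gt.
apply: (@penalized_min_sparse _ _ _ (fun z' => f x z' + lam1 * TK K x)
          (gradz f x z) lam2 M (enorm (gradz f 0 0) + M * (Cx + Cz)) Cz) => //=.
- exact: xz_opt x.
- move=> i c; rewrite -2![X in _ <= X]addrA [lam1 * _ + _]addrC !addrA lerD2r.
  exact: descent_z.
- move=> i; apply: le_trans (gradz_entry_le x z i) _.
  by rewrite lerD2l ler_wpM2l // lerD.
- apply: le_lt_trans lam2_gt; rewrite -addrA lerD2l.
  by rewrite [leLHS](_ : _ = M * (Cx + 3 / 2 * Cz)) //; field.
Qed.

End SeparableCoordinates.

Theorem theorem2 (R : realType) (p N : nat) (f : 'rV[R]_p -> 'rV[R]_N -> R)
  (M : R) (K kappa : nat) (lam1_ lam2_ Cx Cz lam1 lam2 : R) :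
  (forall w : 'rV[R]_(p + N), differentiable (fjoint f) w) ->
  0 < M ->
  (forall (x1 x2 : 'rV[R]_p) (z1 z2 : 'rV[R]_N),
     enorm (row_mx (gradx f x1 z1 - gradx f x2 z2) (gradz f x1 z1 - gradz f x2 z2))
       <= M * enorm (row_mx (x1 - x2) (z1 - z2))) ->
  0 <= lam1_ -> 0 <= lam2_ ->
  (exists B : R, forall x z, Sopt f K kappa lam1_ lam2_ x z -> enorm (row_mx x z) <= B) ->
  (forall x z, Sopt f K kappa lam1_ lam2_ x z -> enorm x <= Cx /\ enorm z <= Cz) ->
  Num.max (enorm (gradx f 0 0) + M * (3 / 2 * Cx + Cz)) lam1_ < lam1 ->
  Num.max (enorm (gradz f 0 0) + M * (Cx + 3 / 2 * Cz)) lam2_ < lam2 ->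
  (forall x z, Sopt f K kappa lam1 lam2 x z -> Sopt f K kappa lam1_ lam2_ x z) ->
  (forall x z, Sopt f K kappa lam1 lam2 x z -> copt f K kappa x z) /\
  ((exists x z, Sopt f K kappa lam1 lam2 x z) ->
     forall x z, copt f K kappa x z -> Sopt f K kappa lam1 lam2 x z).
Proof.
(* The boundedness of S(lam1_, lam2_) and the bounds lam1_ <= lam1, lam2_ <= lam2
   only serve to make Cx and Cz exist; the proof uses Cx and Cz directly. *)
move=> f_diff /ltW M_ge0 f_lip _ _ _ S_le.
rewrite !gt_max => /andP[lam1_gt _] /andP[lam2_gt _] S_sub.
have pen_feasible x z : (l0norm x <= K)%N -> (l0norm z <= kappa)%N ->
    pen f K kappa lam1 lam2 x z = f x z.
  by move=> xK zk; rewrite /pen !TK_eq0 // !mulr0 !addr0.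
have S_copt x z : Sopt f K kappa lam1 lam2 x z -> copt f K kappa x z.
  move=> xz_opt; have [x_le z_le] := S_le x z (S_sub x z xz_opt).
  have xK := Sopt_sparse_x f_diff f_lip M_ge0 xz_opt x_le z_le lam1_gt.
  have zk := Sopt_sparse_z f_diff f_lip M_ge0 xz_opt x_le z_le lam2_gt.
  split=> // x' z' x'K z'k.
  by rewrite -(pen_feasible x z) // -(pen_feasible x' z').
split=> // -[x0 [z0 x0z0_opt]] x z [xK zk x_min] x' z'.
have [x0K z0k _] := S_copt x0 z0 x0z0_opt.
rewrite pen_feasible //; apply: le_trans (x0z0_opt x' z').
by rewrite pen_feasible // x_min.
Qed.
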